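(* Every finite connected chordal graph can be reduced through a sequence of erasures to a tree.
   Context: All graphs are finite, undirected, simple. A graph is chordal if every induced cycle has length three. A facet edge of $G$ is an edge $xy$ such that $\{x,y\}$ is a maximal clique of $G$. An edge of $G$ is exposed if it is contained in a unique maximal clique of $G$ and it is not a facet edge. For graphs $G,H$ on the same vertex set, $H$ is obtained from $G$ through an erasure if $G$ contains an exposed edge $e$ with $H=G-e$. *)

From Stdlib Require Import Relations.
From mathcomp Require Import all_boot.
Set Implicit Arguments. Unset Strict Implicit. Unset Printing Implicit Defensive.

Section Graphs.
Variable T : finType.

Definition simple_graph (G : rel T) : Prop :=
  irreflexive G /\ symmetric G.

Definition connected_graph (G : rel T) : Prop :=
  0 < #|T| /\ forall x y : T, connect G x y.

Definition is_cycle (G : rel T) (s : seq T) : Prop :=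
  [/\ uniq s, 3 <= size s & cycle G s].

Definition induced_cycle (G : rel T) (s : seq T) : Prop :=
  is_cycle G s /\
  forall x y, x \in s -> y \in s -> G x y -> (y == next s x) || (y == prev s x).

Definition chordal (G : rel T) : Prop :=
  forall s, induced_cycle G s -> size s = 3.

Definition acyclic (G : rel T) : Prop := forall s, ~ is_cycle G s.

Definition tree (G : rel T) : Prop := connected_graph G /\ acyclic G.

Definition clique (G : rel T) (K : {set T}) : Prop :=
  forall x y, x \in K -> y \in K -> x != y -> G x y.

Definition maximal_clique (G : rel T) (K : {set T}) : Prop :=
  clique G K /\ forall K' : {set T}, clique G K' -> K \subset K' -> K' = K.

Definition facet_edge (G : rel T) (x y : T) : Prop :=
  G x y /\ maximal_clique G [set x; y].

Definition exposed_edge (G : rel T) (x y : T) : Prop :=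
  [/\ G x y,
      (exists K : {set T}, maximal_clique G K /\ [set x; y] \subset K /\
         forall K' : {set T}, maximal_clique G K' -> [set x; y] \subset K' -> K' = K)
    & ~ facet_edge G x y].

Definition edge_deleted (G H : rel T) (x y : T) : Prop :=
  forall u v, H u v = G u v && ([set u; v] != [set x; y]).

Definition erasure (G H : rel T) : Prop :=
  exists x y, exposed_edge G x y /\ edge_deleted G H x y.

End Graphs.

From Stdlib Require Import Relations Classical.
From mathcomp Require Import all_boot zify.
Set Implicit Arguments. Unset Strict Implicit. Unset Printing Implicit Defensive.

(* Chordality is replaced by the local property [outside_path_chord]: if two
   neighbours a, b of a vertex c are joined by a path running outside the closed
   neighbourhood of c, then ab is an edge.  A chordal graph has it, because a
   shortest such path closes an induced cycle of length at least four through c.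
   It yields Dirac's lemma: every vertex set spans a clique or contains two
   non-adjacent vertices that are simplicial in it.  Hence a graph with a cycle has
   a triangle, and a vertex v that is simplicial among the vertices lying on
   triangles, together with a triangle vpq, gives an edge vp whose common
   neighbourhood is a nonempty clique.  Then {v, p} plus that neighbourhood is the
   unique maximal clique through vp and is larger than {v, p}: vp is exposed.
   Deleting vp keeps the graph connected (through q), preserves
   [outside_path_chord] and lowers the number of edges, so the erasures end at a
   connected acyclic graph. *)

Section Walks.
Variable T : finType.
Implicit Types (e : rel T) (P : pred T) (p : nat -> T).

Definition restrict e P : rel T := fun x y => [&& e x y, P x & P y].

Lemma restrict_sym e P : symmetric e -> symmetric (restrict e P).
Proof. by move=> esym x y; rewrite /restrict esym; congr andb; apply: andbC. Qed.

Lemma connect_first_hit e P u v : connect e u v -> ~~ P u -> P v ->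
  exists z w, [/\ connect (restrict e (predC P)) u z, ~~ P z, e z w & P w].
Proof.
move/connectP=> [p e_p ->] {v}; elim: p u e_p => [|x p IH] u /=.
  by move=> _ Pu Pu'; rewrite Pu' in Pu.
case/andP=> eux e_p Pu Plast; have [Px | nPx] := boolP (P x).
  by exists u, x; split=> //; apply: connect0.
have [z [w [uz nPz ezw Pw]]] := IH x e_p nPx Plast.
exists z, w; split=> //; apply: connect_trans uz; apply: connect1.
by rewrite /restrict eux /= Pu.
Qed.

Lemma connect_restrict_reach e P u v :
  (forall w, connect e u w -> P w) -> connect e u v -> connect (restrict e P) u v.
Proof.
move=> reachP /connectP[p e_p ->] {v}; elim: p u e_p reachP => [|x p IH] u /=.
  by move=> _ _; apply: connect0.
case/andP=> eux e_p reachP; have eux' := connect1 eux.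
apply: connect_trans (IH x e_p _); last by move=> w xw; apply/reachP/(connect_trans eux').
by apply: connect1; rewrite /restrict eux !reachP ?connect0.
Qed.

Definition walk e p m := forall t, t < m -> e (p t) (p t.+1).

Definition inner_in P p m := forall t, 0 < t < m -> P (p t).

Definition chordless e p m := forall i j, i < j <= m -> e (p i) (p j) -> j = i.+1.

Lemma restrict_connect_walk e P a b u v : e a u -> e v b -> P u ->
  connect (restrict e P) u v ->
  exists m p, [/\ p 0 = a, p m = b, walk e p m & inner_in P p m].
Proof.
move=> eau evb Pu /connectP[q /(pathP b) qpath v_last]; subst v.
exists (size q).+2, (nth b (a :: u :: q)); split=> //.
- by rewrite nth_default.
- move=> [|t] /= t_lt //; rewrite !ltnS leq_eqVlt in t_lt.
  case/orP: t_lt => [/eqP->|/qpath/and3P[] //].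
  by rewrite [nth _ q _]nth_default // -last_nth.
- move=> [|[|t]] //= t_lt; rewrite !ltnS in t_lt.
  by case/and3P: (qpath t t_lt).
Qed.

Definition skip p i j s := if s <= i then p s else p (s + (j - i.+1)).

Lemma walk_skip e P p m i j : walk e p m -> inner_in P p m ->
  i.+1 < j <= m -> e (p i) (p j) ->
  let m' := m - (j - i.+1) in
  [/\ skip p i j 0 = p 0, skip p i j m' = p m,
      walk e (skip p i j) m' & inner_in P (skip p i j) m'].
Proof.
move=> wp inp /andP[ij jm] eij m'; rewrite /skip /m'; split=> //.
- rewrite ifF; last by apply/negbTE; rewrite -ltnNge; lia.
  by have -> : m - (j - i.+1) + (j - i.+1) = m by lia.
- move=> s s_lt; case: (leqP s i) => s_i; case: (leqP s.+1 i) => s1_i; try lia.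
  + by apply: wp; lia.
  + have -> : s = i by lia.
    by have -> : i.+1 + (j - i.+1) = j by lia.
  + by rewrite addSn; apply: wp; lia.
- by move=> s s_lt; case: (leqP s i) => s_i; apply: inp; lia.
Qed.

Lemma chordless_walk_exists e P p m : walk e p m -> inner_in P p m ->
  exists m' p', [/\ p' 0 = p 0, p' m' = p m, walk e p' m', inner_in P p' m'
                   & chordless e p' m'].
Proof.
elim/ltn_ind: m p => m IH p wp inp.
have [ch | not_ch] := classic (chordless e p m); first by exists m, p.
have [i [j [ij eij j_ne]]] :
    exists i j, [/\ i < j <= m, e (p i) (p j) & j <> i.+1].
  apply: NNPP => no_chord; apply: not_ch => i j ij eij.
  by apply: NNPP => j_ne; apply: no_chord; exists i, j.
have i1j : i.+1 < j <= m by lia.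
have [p'0 p'm wp' inp'] := walk_skip wp inp i1j eij.
have [m'' [p'' [p0 pm *]]] := IH (m - (j - i.+1)) ltac:(lia) _ wp' inp'.
by exists m'', p''; rewrite p0 pm p'0 p'm.
Qed.

Lemma chordless_walk_inj e p m : walk e p m -> chordless e p m -> p 0 != p m ->
  forall i j, i <= m -> j <= m -> p i = p j -> i = j.
Proof.
move=> wp chp p0m.
suff lt_ne i j : i < j <= m -> p i = p j -> False.
  move=> i j im jm pij; case: (ltngtP i j) => // [ij | ji].
  - by case: (lt_ne i j); rewrite ?ij.
  - by case: (lt_ne j i); rewrite ?ji.
move=> /andP[ij jm] pij; have [jm' | jm'] : j < m \/ j = m by lia.
- by have := chp i j.+1; rewrite pij (wp j jm') => /(_ ltac:(lia) isT); lia.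
- case: i ij pij => [_ | i ij pij].
    by rewrite jm' => p0m'; rewrite p0m' eqxx in p0m.
  by have := chp i j; rewrite -pij (wp i ltac:(lia)) => /(_ ltac:(lia) isT); lia.
Qed.

End Walks.

Section InducedCycles.
Variable T : finType.
Implicit Types (G : rel T) (f p : nat -> T).

Lemma next_mkseq f n i : uniq (mkseq f n) -> i < n ->
  next (mkseq f n) (f i) = f (i.+1 %% n).
Proof.
move=> f_uniq i_lt; rewrite next_nth.
have fi_eq : nth (f 0) (mkseq f n) i = f i by rewrite nth_mkseq.
have -> : f i \in mkseq f n by rewrite -fi_eq mem_nth ?size_mkseq.
have -> : index (f i) (mkseq f n) = i by rewrite -fi_eq index_uniq ?size_mkseq.
case: n f_uniq i_lt fi_eq => [//|n] _ i_lt _ /=.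
case: (ltngtP i n) => [i_n | n_i | ->].
- by rewrite (nth_map 0) ?size_iota // nth_iota // add1n modn_small.
- lia.
- by rewrite nth_default ?size_map ?size_iota ?modnn.
Qed.

Lemma mkseq_induced_cycle G f n : 3 <= n ->
  (forall i j, i < n -> j < n -> f i = f j -> i = j) ->
  (forall i, i < n -> G (f i) (f (i.+1 %% n))) ->
  (forall i j, i < n -> j < n -> G (f i) (f j) -> j = i.+1 %% n \/ i = j.+1 %% n) ->
  induced_cycle G (mkseq f n).
Proof.
move=> n3 f_inj f_step f_chord.
have f_uniq : uniq (mkseq f n) by apply/mkseq_uniqP => i j /= i_lt j_lt; apply: f_inj.
have memP x : x \in mkseq f n -> exists2 i, i < n & x = f i.
  by move=> /mapP[i]; rewrite mem_iota add0n => /andP[_ i_lt] ->; exists i.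
split; first split=> //.
- by rewrite size_mkseq.
- apply: (cycle_from_next f_uniq) => x /memP[i i_lt ->].
  by rewrite next_mkseq // f_step.
- move=> x y /memP[i i_lt ->] /memP[j j_lt ->] /(f_chord i j i_lt j_lt)[->|->].
    by rewrite next_mkseq // eqxx.
  by rewrite -next_mkseq // prev_next // eqxx orbT.
Qed.

Lemma apex_induced_cycle G p m c : simple_graph G -> 2 <= m ->
  walk G p m -> chordless G p m ->
  (forall i j, i <= m -> j <= m -> p i = p j -> i = j) ->
  (forall t, t <= m -> p t != c) ->
  (forall t, t <= m -> G c (p t) = (t == 0) || (t == m)) ->
  induced_cycle G (mkseq (fun t => if t <= m then p t else c) m.+2).
Proof.
move=> [Girr Gsym] m2 wp chp p_inj p_c Gc.
have modS t : t <= m -> t.+1 %% m.+2 = t.+1 by move=> t_le; rewrite modn_small.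
have modN : m.+2 %% m.+2 = 0 by rewrite modnn.
apply: mkseq_induced_cycle; first lia.
- move=> i j i_lt j_lt.
  have [i_le | i_gt] := leqP i m; have [j_le | j_gt] := leqP j m.
  + exact: p_inj.
  + by move=> pc; move: (p_c i i_le); rewrite pc eqxx.
  + by move=> pc; move: (p_c j j_le); rewrite pc eqxx.
  + lia.
- move=> i i_lt.
  have [i_lt' | [i_eq | i_eq]] : i < m \/ i = m \/ i = m.+1 by lia.
  + by rewrite (modS i (ltnW i_lt')) i_lt' (ltnW i_lt'); apply: wp.
  + by rewrite i_eq modS // leqnn ltnn Gsym Gc // eqxx orbT.
  + by rewrite i_eq modN ltnn Gc.
- move=> i j i_lt j_lt.
  have [i_le | i_gt] := leqP i m; have [j_le | j_gt] := leqP j m.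
  + move=> Gij; have [ij | ji | ij] := ltngtP i j.
    * by left; rewrite modS //; apply: chp => //; rewrite ij.
    * by right; rewrite modS //; apply: chp; rewrite ?ji // Gsym.
    * by rewrite ij Girr in Gij.
  + have -> : j = m.+1 by lia.
    rewrite Gsym Gc // => /orP[/eqP-> | /eqP->]; first by right.
    by left; rewrite modS.
  + have -> : i = m.+1 by lia.
    rewrite Gc // => /orP[/eqP-> | /eqP->]; first by left.
    by right; rewrite modS.
  + by rewrite Girr.
Qed.

End InducedCycles.

Section OutsidePathChord.
Variable T : finType.
Implicit Types G : rel T.

Definition far G c x := (x != c) && ~~ G c x.

Definition outside_path_chord G := forall c a b u v,
  G c a -> G c b -> a != b -> G a u -> G b v -> far G c u -> far G c v ->
  connect (restrict G (far G c)) u v -> G a b.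

Lemma chordal_outside_path_chord G :
  simple_graph G -> chordal G -> outside_path_chord G.
Proof.
move=> [Girr Gsym] Gch c a b u v Gca Gcb ab Gau Gbv far_u _ conn.
apply: contraT => nab.
have [m0 [p0 [p00 p0m wp0 inp0]]] :
    exists m p, [/\ p 0 = a, p m = b, walk G p m & inner_in (far G c) p m].
  apply: (restrict_connect_walk Gau _ far_u conn).
  by rewrite Gsym.
have [m [p [p_0 p_m wp inp chp]]] := chordless_walk_exists wp0 inp0.
rewrite p00 in p_0; rewrite p0m in p_m.
have m2 : 1 < m.
  case: m p_m wp {inp chp} => [|[|m]] // p_m wp.
    by rewrite -p_0 -p_m eqxx in ab.
  by move: (wp 0 isT); rewrite p_0 p_m (negbTE nab).
have p_inj := chordless_walk_inj wp chp ltac:(by rewrite p_0 p_m).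
have c_ne x : G c x -> x != c by apply: contraTneq => ->; rewrite Girr.
have p_c t : t <= m -> p t != c.
  move=> t_le; have [-> | t_pos] := posnP t; first by rewrite p_0 c_ne.
  have [-> | t_ne] := eqVneq t m; first by rewrite p_m c_ne.
  by case/andP: (inp t ltac:(lia)).
have Gc_p t : t <= m -> G c (p t) = (t == 0) || (t == m).
  move=> t_le; have [-> | t_pos] := posnP t; first by rewrite p_0 Gca.
  have [-> | t_ne] := eqVneq t m; first by rewrite p_m Gcb orbT.
  by case/andP: (inp t ltac:(lia)) => _ /negbTE->; apply/esym/norP; split; lia.
have := Gch _ (apex_induced_cycle (conj Girr Gsym) m2 wp chp p_inj p_c Gc_p).
by rewrite size_mkseq; lia.
Qed.

End OutsidePathChord.

Section Simplicial.
Variables (T : finType) (G : rel T).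
Hypotheses (Girr : irreflexive G) (Gsym : symmetric G) (Gopc : outside_path_chord G).

Definition simplicial_in (X : {set T}) v :=
  forall x y, x \in X -> y \in X -> G v x -> G v y -> x != y -> G x y.

Definition nonadj_simplicial_pair (X : {set T}) := exists v1 v2,
  [/\ v1 \in X, v2 \in X, v1 != v2, ~~ G v1 v2 & simplicial_in X v1 /\ simplicial_in X v2].

Lemma simplicial_in_nbrs (X Y : {set T}) v :
  (forall w, w \in X -> G v w -> w \in Y) -> simplicial_in Y v -> simplicial_in X v.
Proof. by move=> XY vY x y xX yX vx vy; apply: vY; rewrite ?XY. Qed.

Lemma clique_simplicial_in (X : {set T}) v : clique G X -> simplicial_in X v.
Proof. by move=> Xcl x y xX yX _ _; apply: Xcl. Qed.

Section Separator.
Variables (X : {set T}) (a b : T).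
Hypotheses (aX : a \in X) (bX : b \in X) (far_b : far G a b).
Hypothesis IH : forall Y : {set T}, #|Y| < #|X| -> clique G Y \/ nonadj_simplicial_pair Y.

(* C is the component of b in X minus the closed neighbourhood of a, and S the
   neighbours of a attached to C: S is a clique separating C from the rest of X. *)
Let X' := [set w in X | far G a w].
Let C := [set w in X' | connect (restrict G (mem X')) b w].
Let S := [set s in X | G a s && [exists w in C, G s w]].

Let bC : b \in C.
Proof. by rewrite !inE bX far_b connect0. Qed.

Let CX w : w \in C -> w \in X.
Proof. by rewrite !inE => /andP[/andP[]]. Qed.

Let C_far w : w \in C -> far G a w.
Proof. by rewrite !inE => /andP[/andP[]]. Qed.

Let aCS : a \notin C :|: S.
Proof.
rewrite in_setU negb_or [a \in S]inE Girr andbF andbT.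
by apply/negP => /C_far; rewrite /far eqxx.
Qed.

Lemma comp_nbr_in w x : w \in C -> x \in X -> G w x -> x \in C :|: S.
Proof.
move=> wC xX Gwx; rewrite in_setU !inE xX /=.
have [Gax | nGax] := boolP (G a x).
  by apply/orP; right; apply/existsP; exists w; rewrite wC Gsym.
have x_a : x != a.
  by apply: contraTneq Gwx => ->; rewrite Gsym; case/andP: (C_far wC).
have xX' : x \in X' by rewrite !inE xX /far x_a nGax.
rewrite /far x_a nGax orbF; move: wC; rewrite inE => /andP[wX' cbw].
by apply: connect_trans cbw (connect1 _); apply/and3P.
Qed.

Lemma attach_clique : clique G S.
Proof.
move=> s1 s2; rewrite !inE => /and3P[_ Gas1 /existsP[w1 /andP[w1C G1]]].
move=> /and3P[_ Gas2 /existsP[w2 /andP[w2C G2]]] s12.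
apply: (Gopc Gas1 Gas2 s12 G1 G2 (C_far w1C) (C_far w2C)).
move: w1C w2C; rewrite !inE => /andP[_ c1] /andP[_ c2].
have c12 : connect (restrict G (mem X')) w1 w2.
  by apply: connect_trans c2; rewrite (sym_connect_sym (restrict_sym _ Gsym)).
apply: connect_sub c12 => x y /and3P[Gxy xX' yX']; apply: connect1.
by move: xX' yX'; rewrite !inE /restrict Gxy => /andP[_ ->] /andP[_ ->].
Qed.

Lemma comp_simplicial : exists2 v, v \in C & simplicial_in X v.
Proof.
have ltCS : #|C :|: S| < #|X|.
  apply: proper_card; apply/properP; split; last by exists a.
  by apply/subsetP => w; rewrite in_setU => /orP[/CX // | ]; rewrite inE => /andP[].
have lift v : v \in C -> simplicial_in (C :|: S) v -> simplicial_in X v.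
  by move=> vC; apply: simplicial_in_nbrs => w; apply: comp_nbr_in.
have [CScl | [v1 [v2 [v1CS v2CS v12 nG12 [s1 s2]]]]] := IH ltCS.
  by exists b => //; apply/lift/clique_simplicial_in.
move: v1CS v2CS nG12; rewrite !in_setU => /orP[v1C | v1S] /orP[v2C | v2S] nG12.
- by exists v1 => //; apply: lift.
- by exists v1 => //; apply: lift.
- by exists v2 => //; apply: lift.
- by rewrite (attach_clique v1S v2S v12) in nG12.
Qed.

Lemma outer_simplicial : exists2 v, v \in X :\: (C :|: S) & simplicial_in X v.
Proof.
have ltXC : #|X :\: C| < #|X|.
  apply: proper_card; apply/properP; split; first exact: subsetDl.
  by exists b; rewrite ?in_setD ?bC.
have lift z : z \in X :\: (C :|: S) -> simplicial_in (X :\: C) z -> simplicial_in X z.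
  move=> zXCS; apply: simplicial_in_nbrs => w wX Gzw; rewrite in_setD wX andbT.
  apply/negP => wC; move: zXCS; rewrite in_setD => /andP[/negP zCS zX].
  by apply: zCS; apply: (comp_nbr_in wC zX); rewrite Gsym.
have [XCcl | [v1 [v2 [v1XC v2XC v12 nG12 [s1 s2]]]]] := IH ltXC.
  have aXCS : a \in X :\: (C :|: S) by rewrite in_setD aCS.
  by exists a => //; apply/lift/clique_simplicial_in.
move: v1XC v2XC; rewrite !in_setD => /andP[v1C v1X] /andP[v2C v2X].
have outside v : v \in X -> v \notin C -> v \notin S -> v \in X :\: (C :|: S).
  by move=> vX vC vS; rewrite in_setD in_setU negb_or vC vS.
have [v1S | v1S] := boolP (v1 \in S); last first.
  by exists v1; [| apply: lift]; rewrite ?outside.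
have [v2S | v2S] := boolP (v2 \in S); first by rewrite (attach_clique v1S v2S v12) in nG12.
by exists v2; [| apply: lift]; rewrite ?outside.
Qed.

Lemma separated_simplicial_pair : nonadj_simplicial_pair X.
Proof.
have [v vC sv] := comp_simplicial.
have [v' v'out sv'] := outer_simplicial.
move: v'out; rewrite in_setD in_setU negb_or => /andP[/andP[v'C v'S] v'X].
exists v, v'; split=> //; first exact: CX.
- by apply: contraNneq v'C => <-.
- apply/negP => Gvv'; have := comp_nbr_in vC v'X Gvv'.
  by rewrite in_setU (negbTE v'C) (negbTE v'S).
Qed.

End Separator.

Lemma clique_or_nonadj_simplicial_pair (X : {set T}) :
  clique G X \/ nonadj_simplicial_pair X.
Proof.
have [n] := ubnP #|X|; elim: n X => // n IHn X leXn.
have IH (Y : {set T}) : #|Y| < #|X| -> clique G Y \/ nonadj_simplicial_pair Y.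
  by move=> ltYX; apply: IHn; apply: leq_trans ltYX _.
have [Xcl | nXcl] := classic (clique G X); [by left | right].
have [a [b [aX bX ab nGab]]] : exists a b, [/\ a \in X, b \in X, b != a & ~~ G a b].
  apply: NNPP => no_pair; apply: nXcl => a b aX bX ab.
  have [// | nGab] := boolP (G a b).
  by case: no_pair; exists a, b; rewrite eq_sym.
by apply: (separated_simplicial_pair aX bX) => //; apply/andP.
Qed.

Lemma simplicial_exists (X : {set T}) :
  X != set0 -> exists2 v, v \in X & simplicial_in X v.
Proof.
case/set0Pn => w wX.
have [Xcl | [v [_ [vX _ _ _ [sv _]]]]] := clique_or_nonadj_simplicial_pair X.
  by exists w => //; apply: clique_simplicial_in.
by exists v.
Qed.
End Simplicial.

Section DeleteEdge.
Variables (T : finType) (G : rel T).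

Lemma set2_eq (u w x y : T) :
  ([set u; w] == [set x; y]) = (u == x) && (w == y) || (u == y) && (w == x).
Proof.
apply/eqP/idP => [E | /orP[] /andP[/eqP-> /eqP->] //]; last exact: setUC.
have uw_in : (u \in [set x; y]) && (w \in [set x; y]) by rewrite -E !inE !eqxx orbT.
have xy_in : (x \in [set u; w]) && (y \in [set u; w]) by rewrite E !inE !eqxx orbT.
move: uw_in xy_in; rewrite !inE => /andP[+ +] /andP[+ +].
by do 4![case/orP=> /eqP ?]; subst; rewrite !eqxx ?orbT.
Qed.

Definition del_edge x y : rel T := fun u w => G u w && ([set u; w] != [set x; y]).

Definition common_nbrs x y := [set z | G x z && G y z].

Lemma del_edgeE x y u w :
  del_edge x y u w = G u w && ~~ ((u == x) && (w == y) || (u == y) && (w == x)).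
Proof. by rewrite /del_edge set2_eq. Qed.

Lemma del_edgeC x y : del_edge x y = del_edge y x.
Proof. by rewrite /del_edge setUC. Qed.

Lemma common_nbrsC x y : common_nbrs x y = common_nbrs y x.
Proof. by apply/setP => z; rewrite !inE andbC. Qed.

Lemma del_edge_sub x y : subrel (del_edge x y) G.
Proof. by move=> u w /andP[]. Qed.

Hypotheses (Girr : irreflexive G) (Gsym : symmetric G) (Gopc : outside_path_chord G).

Lemma del_edge_sym x y : symmetric (del_edge x y).
Proof. by move=> u w; rewrite /del_edge Gsym setUC. Qed.

Lemma del_edge_out x y c w : c != x -> c != y -> del_edge x y c w = G c w.
Proof. by move=> /negbTE cx /negbTE cy; rewrite del_edgeE cx cy andbT. Qed.

Lemma far_del_edge_out x y c w : c != x -> c != y -> far (del_edge x y) c w = far G c w.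
Proof. by move=> cx cy; rewrite /far del_edge_out. Qed.

Lemma connect_far_del_edge_out x y c u v : c != x -> c != y ->
  connect (restrict (del_edge x y) (far (del_edge x y) c)) u v ->
  connect (restrict G (far G c)) u v.
Proof.
move=> cx cy; apply: connect_sub => p q /and3P[Hpq fp fq]; apply: connect1.
by rewrite /restrict (del_edge_sub Hpq) -!(far_del_edge_out _ cx cy) fp fq.
Qed.

Section Edge.
Variables x y : T.
Hypotheses (Gxy : G x y) (common_clique : clique G (common_nbrs x y)).

Let H := del_edge x y.
Let Q := restrict H (far H x).

Let xy : x != y.
Proof. by apply: contraTneq Gxy => ->; rewrite Girr. Qed.

Let del_edge_end w : w != y -> H x w = G x w.
Proof. by move=> /negbTE wy; rewrite /H del_edgeE eqxx wy (negbTE xy) andbT. Qed.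

Let far_end w : far H x w -> w != y -> far G x w.
Proof. by move=> /andP[wx nHxw] wy; rewrite /far wx -del_edge_end. Qed.

Let Q_lift p q : restrict Q (predC (pred1 y)) p q -> restrict G (far G x) p q.
Proof.
case/and3P=> /and3P[Hpq fp fq] py qy.
by rewrite /restrict (del_edge_sub Hpq) !far_end.
Qed.

Lemma nbr_connected_to_end_adj p w : G x p -> p != y -> G p w -> far H x w ->
  connect Q w y -> G p y.
Proof.
move=> Gxp py Gpw fw wy_conn; have [<- // | wy] := eqVneq w y.
have [z [y' [wz zy Qzy' /eqP y'y]]] := connect_first_hit wy_conn (P := pred1 y) wy (eqxx y).
subst y'; case/and3P: Qzy' => Hzy fz _.
apply: (Gopc Gxp Gxy py Gpw _ (far_end fw wy) (far_end fz zy)).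
  by rewrite Gsym (del_edge_sub Hzy).
by apply: connect_sub wz => p' q' /Q_lift /connect1.
Qed.

Lemma del_edge_chord_at_end a b u v : H x a -> H x b -> a != b -> H a u -> H b v ->
  far H x u -> far H x v -> connect Q u v -> G a b.
Proof.
move=> Hxa Hxb ab Hau Hbv fu fv uv.
have end_ne w : H x w -> w != y.
  by apply: contraTneq => ->; rewrite /H del_edgeE !eqxx andbF.
(* Either the path reaches y, and then a and b are common neighbours of x and y,
   or it avoids y and thus stays outside the closed neighbourhood of x in G. *)
have [uy | nuy] := boolP (connect Q u y).
  have Qsym : symmetric Q by apply/restrict_sym/del_edge_sym.
  have vy : connect Q v y by apply: connect_trans uy; rewrite (sym_connect_sym Qsym).
  have Gay := nbr_connected_to_end_adj (del_edge_sub Hxa) (end_ne _ Hxa)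
    (del_edge_sub Hau) fu uy.
  have Gby := nbr_connected_to_end_adj (del_edge_sub Hxb) (end_ne _ Hxb)
    (del_edge_sub Hbv) fv vy.
  by apply: common_clique ab; rewrite inE ?(del_edge_sub Hxa) ?(del_edge_sub Hxb)
    Gsym ?Gay ?Gby.
have reach_ne w : connect Q u w -> w != y by move=> uw; apply: contraNneq nuy => <-.
apply: (Gopc (del_edge_sub Hxa) (del_edge_sub Hxb) ab (del_edge_sub Hau) (del_edge_sub Hbv)).
- by apply: far_end fu (reach_ne _ (connect0 _ _)).
- by apply: far_end fv (reach_ne _ uv).
by apply: connect_sub (connect_restrict_reach reach_ne uv) => p q /Q_lift /connect1.
Qed.

(* The chord forced at a third vertex c is never the deleted edge. *)
Lemma del_edge_ends_unlinked c u v : H c x -> H c y -> G x u -> G y v ->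
  far H c u -> far H c v -> connect (restrict H (far H c)) u v -> False.
Proof.
move=> /del_edge_sub Gcx /del_edge_sub Gcy Gxu Gyv.
have cx : c != x by apply: contraTneq Gcx => ->; rewrite Girr.
have cy : c != y by apply: contraTneq Gcy => ->; rewrite Girr.
rewrite !far_del_edge_out // => fu fv /(connect_far_del_edge_out cx cy) uv.
(* c is a common neighbour of x and y, hence adjacent to every other one. *)
have not_common w : G x w -> G y w -> far G c w -> False.
  move=> Gxw Gyw /andP[wc /negP[]]; apply: common_clique; rewrite 1?eq_sym //.
    by rewrite inE Gsym Gcx Gsym Gcy.
  by rewrite inE Gxw Gyw.
have far_ne w z : far G c w -> G c z -> w != z.
  by case/andP=> _ nGcw Gcz; apply: contraNneq nGcw => ->.
pose P w := (w == x) || G x w.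
have nPv : ~~ P v.
  rewrite /P negb_or; apply/andP; split; first exact: far_ne fv Gcx.
  by apply/negP => Gxv; apply: (not_common v); rewrite // Gsym.
have vu : connect (restrict G (far G c)) v u.
  by rewrite (sym_connect_sym (restrict_sym _ Gsym)).
have Pu : P u by rewrite /P Gxu orbT.
have [z [w [vz nPz /and3P[Gzw _ fw] Pw]]] := connect_first_hit vu nPv Pu.
have wx : w != x := far_ne _ _ fw Gcx.
have Gxw : G x w by move: Pw; rewrite /P (negbTE wx).
have wy : w != y := far_ne _ _ fw Gcy.
have farP p : ~~ P p -> far G x p by rewrite /P negb_or.
apply: (not_common w Gxw _ fw); rewrite Gsym.
apply: (Gopc Gxw Gxy wy _ Gyv (farP _ nPz) (farP _ nPv)); first by rewrite Gsym.
rewrite (sym_connect_sym (restrict_sym _ Gsym)).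
apply: connect_sub vz => p q /and3P[/and3P[Gpq _ _] Pp Pq].
by apply/connect1/and3P; split; rewrite ?farP.
Qed.

End Edge.

Lemma outside_path_chord_del_edge x y :
  G x y -> clique G (common_nbrs x y) -> outside_path_chord (del_edge x y).
Proof.
move=> Gxy cl c a b u v Hca Hcb ab Hau Hbv fu fv uv.
have Gab : G a b.
  have [c_x | cx] := eqVneq c x.
    by subst c; apply: (del_edge_chord_at_end Gxy cl Hca Hcb ab Hau Hbv fu fv uv).
  have [c_y | cy] := eqVneq c y.
    subst c; rewrite del_edgeC in Hca Hcb Hau Hbv fu fv uv.
    apply: (del_edge_chord_at_end _ _ Hca Hcb ab Hau Hbv fu fv uv); first by rewrite Gsym.
    by rewrite common_nbrsC.
  rewrite !far_del_edge_out // in fu fv.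
  rewrite !del_edge_out // in Hca Hcb.
  exact: (Gopc Hca Hcb ab (del_edge_sub Hau) (del_edge_sub Hbv) fu fv
    (connect_far_del_edge_out cx cy uv)).
rewrite del_edgeE Gab; apply/negP => /orP[] /andP[/eqP ea /eqP eb]; subst a b.
  exact: (del_edge_ends_unlinked Gxy cl Hca Hcb (del_edge_sub Hau) (del_edge_sub Hbv) fu fv uv).
apply: (del_edge_ends_unlinked Gxy cl Hcb Hca (del_edge_sub Hbv) (del_edge_sub Hau) fv fu).
by rewrite (sym_connect_sym (restrict_sym _ (del_edge_sym x y))).
Qed.
End DeleteEdge.

Section ExposedEdges.
Variables (T : finType) (G : rel T).
Hypotheses (Gsimple : simple_graph G) (Gopc : outside_path_chord G).

Let Girr : irreflexive G. Proof. by case: Gsimple. Qed.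
Let Gsym : symmetric G. Proof. by case: Gsimple. Qed.

Lemma exposed_edge_of_common_nbrs x y : G x y ->
  clique G (common_nbrs G x y) -> common_nbrs G x y != set0 -> exposed_edge G x y.
Proof.
move=> Gxy cl /set0Pn[q qxy].
pose K := [set x; y] :|: common_nbrs G x y.
have Kx z : z \in K -> z != x -> G x z.
  by rewrite !inE -orbA => /or3P[/eqP-> | /eqP-> | /andP[]] //; rewrite eqxx.
have Ky z : z \in K -> z != y -> G y z.
  by rewrite !inE -orbA => /or3P[/eqP-> _ | /eqP-> | /andP[]] //; rewrite ?eqxx // Gsym.
have xyK : [set x; y] \subset K by apply: subsetUl.
have K_clique : clique G K.
  move=> u w uK wK uw.
  have [ux | ux] := eqVneq u x; first by subst u; apply: Kx => //; rewrite eq_sym.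
  have [uy | uy] := eqVneq u y; first by subst u; apply: Ky => //; rewrite eq_sym.
  have [wx | wx] := eqVneq w x; first by subst w; rewrite Gsym; apply: Kx.
  have [wy | wy] := eqVneq w y; first by subst w; rewrite Gsym; apply: Ky.
  by apply: cl uw; rewrite inE ?Kx ?Ky.
have K_max K' : clique G K' -> [set x; y] \subset K' -> K' \subset K.
  move=> cl' /subsetP xyK'; apply/subsetP => z zK'.
  have xK' : x \in K' by apply: xyK'; rewrite !inE eqxx.
  have yK' : y \in K' by apply: xyK'; rewrite !inE eqxx orbT.
  rewrite !inE; have [// | zx] := eqVneq z x; have [// | zy] := eqVneq z y.
  by rewrite !cl' // eq_sym.
have K_maximal : maximal_clique G K.
  split=> // K' cl' KK'; apply/eqP; rewrite eqEsubset KK' andbT.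
  by apply: K_max; rewrite // (subset_trans xyK KK').
split=> //.
  exists K; split=> //; split=> // K' [cl' max'] xyK'.
  by apply/esym/max'; rewrite ?K_max.
case=> _ [_ max_xy]; have := max_xy K K_clique xyK; move/setP/(_ q).
have qK : q \in K by rewrite in_setU qxy orbT.
move: qxy; rewrite inE qK !inE => /andP[Gxq Gyq] /esym /orP[] /eqP q_eq.
  by rewrite q_eq Girr in Gxq.
by rewrite q_eq Girr in Gyq.
Qed.

Definition in_triangle v := [exists y, exists z, [&& G v y, G v z & G y z]].

Lemma cycle_in_triangle s : is_cycle G s -> exists v, in_triangle v.
Proof.
case=> s_uniq s_size s_cycle.
have [v vs sv] : exists2 v, v \in s & simplicial_in G [set w in s] v.
  have [|v] := simplicial_exists Girr Gsym Gopc (X := [set w in s]).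
    by case: s s_size {s_uniq s_cycle} => // w s _; apply/set0Pn; exists w;
      rewrite inE mem_head.
  by rewrite inE; exists v.
case: (rot_to vs) => i s' rot_s.
have : uniq (v :: s') /\ cycle G (v :: s') by rewrite -rot_s rot_uniq rot_cycle.
have : 2 <= size s' by move: s_size; rewrite -(size_rot i) rot_s.
have in_s w : w \in v :: s' -> w \in [set u in s] by rewrite -rot_s inE mem_rot.
case: s' rot_s in_s => [|w1 [|w2 t]] // _ in_s _.
rewrite (cycle_path v) /= => -[/andP[_ /andP[w1_nin _]] /and3P[Gwv Gvw1 _]].
exists v; apply/existsP; exists w1; apply/existsP; exists (last w2 t).
have Gvw2 : G v (last w2 t) by rewrite Gsym.
apply/and3P; split=> //; apply: sv => //; try apply: in_s.
- by rewrite !inE eqxx orbT.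
- by rewrite !(in_cons _ (_ :: _)) mem_last !orbT.
- by apply: contraNneq w1_nin => ->; rewrite mem_last.
Qed.

Lemma triangle_clique_common_nbrs : (exists v, in_triangle v) ->
  exists x y, [/\ G x y, clique G (common_nbrs G x y) & common_nbrs G x y != set0].
Proof.
move=> tri; have [|v] := simplicial_exists Girr Gsym Gopc (X := [set v | in_triangle v]).
  by case: tri => v vtri; apply/set0Pn; exists v; rewrite inE.
rewrite inE => /existsP[y /existsP[z /and3P[Gvy Gvz Gyz]]] sv.
have tri_common w : w \in common_nbrs G v y -> w \in [set v | in_triangle v].
  rewrite !inE => /andP[Gvw Gyw]; apply/existsP; exists v; apply/existsP; exists y.
  by rewrite Gsym Gvw Gsym Gyw.
exists v, y; split=> //.
  move=> w w' ww ww'; apply: sv; rewrite ?tri_common //.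
    by move: ww; rewrite inE => /andP[].
  by move: ww'; rewrite inE => /andP[].
by apply/set0Pn; exists z; rewrite inE Gvz Gyz.
Qed.

End ExposedEdges.

Section Erasures.
Variable T : finType.
Implicit Types G : rel T.

Definition edges G := [set e : T * T | G e.1 e.2].

Lemma del_edge_simple G x y : simple_graph G -> simple_graph (del_edge G x y).
Proof.
by case=> Girr Gsym; split=> [u | ]; [rewrite /del_edge Girr | apply: del_edge_sym].
Qed.

Lemma del_edge_connected G x y q : simple_graph G -> connected_graph G ->
  q \in common_nbrs G x y -> connected_graph (del_edge G x y).
Proof.
case=> Girr Gsym [T_gt0 Gconn]; rewrite inE => /andP[Gxq Gyq].
have qx : q != x by apply: contraTneq Gxq => ->; rewrite Girr.
have qy : q != y by apply: contraTneq Gyq => ->; rewrite Girr.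
have Hxy : connect (del_edge G x y) x y.
  apply: (@connect_trans _ _ q); apply: connect1;
    rewrite del_edgeE (negbTE qx) (negbTE qy) ?andbF ?andFb andbT //.
  by rewrite Gsym.
split=> // u w; apply: connect_sub (Gconn u w) => {}u {}w Guw.
have [uw_xy | uw_ne] := eqVneq [set u; w] [set x; y].
  move/eqP: uw_xy; rewrite set2_eq => /orP[] /andP[/eqP-> /eqP->] //.
  by rewrite (sym_connect_sym (del_edge_sym Gsym x y)).
by apply: connect1; rewrite /del_edge Guw uw_ne.
Qed.

Lemma card_edges_del_edge G x y : G x y -> #|edges (del_edge G x y)| < #|edges G|.
Proof.
move=> Gxy; apply: proper_card; apply/properP; split.
  by apply/subsetP => -[u w]; rewrite !inE => /del_edge_sub.
by exists (x, y); rewrite !inE //= /del_edge eqxx andbF.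
Qed.

Lemma erasures_to_tree G :
  simple_graph G -> connected_graph G -> outside_path_chord G ->
  exists H, clos_refl_trans (rel T) (@erasure T) G H /\ tree H.
Proof.
have [n] := ubnP #|edges G|; elim: n G => // n IH G lt_n Gsimple Gconn Gopc.
have [[s s_cycle] | acyclic_G] := classic (exists s, is_cycle G s); last first.
  by exists G; split; [apply: rt_refl | split=> // s s_cycle; apply: acyclic_G; exists s].
have [x [y [Gxy cl nonempty]]] :=
  triangle_clique_common_nbrs Gsimple Gopc (cycle_in_triangle Gsimple Gopc s_cycle).
have [q q_common] := set0Pn _ nonempty.
have [Girr Gsym] := Gsimple.
have [H [GH tree_H]] := IH (del_edge G x y) (leq_trans (card_edges_del_edge Gxy) lt_n)
  (del_edge_simple x y Gsimple) (del_edge_connected Gsimple Gconn q_common)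
  (outside_path_chord_del_edge Girr Gsym Gopc Gxy cl).
exists H; split=> //; apply: rt_trans GH; apply: rt_step.
by exists x, y; split=> //; apply: exposed_edge_of_common_nbrs.
Qed.

End Erasures.

Theorem proposition2p10 (T : finType) (G : rel T) :
  simple_graph G -> connected_graph G -> chordal G ->
  exists H : rel T, clos_refl_trans (rel T) (@erasure T) G H /\ tree H.
Proof.
move=> Gsimple Gconn Gchordal.
exact: erasures_to_tree Gsimple Gconn (chordal_outside_path_chord Gsimple Gchordal).
Qed.
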